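(* For every lazy expression $E$ and every nonempty polyhedron $C\subseteq\mathbb{R}^n$, the structurally defined bounds satisfy $\mathrm{LB}(E,C)\le\inf_{x\in C}[\![E]\!](x)\le\sup_{x\in C}[\![E]\!](x)\le\mathrm{UB}(E,C)$.
   Context: Lazy (scalar) expressions are generated by the grammar $E::=\mathtt{Affine}(w,b)\mid\mathtt{Sum}(\{E_1,\dots,E_k\})\mid\mathtt{Max}(\{E_1,\dots,E_k\})\mid\mathtt{Scale}(c,E)\mid\mathtt{Bias}(b,E)$ with $w\in\mathbb{R}^n$, $b,c\in\mathbb{R}$, and denote functions $\mathbb{R}^n\to\mathbb{R}$: $[\![\mathtt{Affine}(w,b)]\!](x)=w^\top x+b$, $[\![\mathtt{Sum}(\{E_i\})]\!]=\sum_i[\![E_i]\!]$, $[\![\mathtt{Max}(\{E_i\})]\!]=\max_i[\![E_i]\!]$, $[\![\mathtt{Scale}(c,E)]\!]=c[\![E]\!]$, $[\![\mathtt{Bias}(b,E)]\!]=[\![E]\!]+b$. A polyhedron is a finite intersection of closed halfspaces. The bounds (values in $\mathbb{R}\cup\{\pm\infty\}$, with $0\cdot(\pm\infty)=0$) are defined recursively: $\mathrm{LB}(\mathtt{Affine}(w,b),C)=\inf_{x\in C}(w^\top x+b)$, $\mathrm{UB}(\mathtt{Affine}(w,b),C)=\sup_{x\in C}(w^\top x+b)$; $\mathrm{LB}/\mathrm{UB}$ of $\mathtt{Sum}$ are the sums of the children's $\mathrm{LB}$/$\mathrm{UB}$; $\mathrm{LB}(\mathtt{Scale}(c,E),C)=c\,\mathrm{LB}(E,C)$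 if $c\ge0$ and $c\,\mathrm{UB}(E,C)$ if $c<0$, $\mathrm{UB}(\mathtt{Scale}(c,E),C)=c\,\mathrm{UB}(E,C)$ if $c\ge0$ and $c\,\mathrm{LB}(E,C)$ if $c<0$; $\mathrm{LB}/\mathrm{UB}(\mathtt{Bias}(b,E),C)=\mathrm{LB}/\mathrm{UB}(E,C)+b$; $\mathrm{LB}(\mathtt{Max}(\{E_i\}),C)=\max_i\mathrm{LB}(E_i,C)$, $\mathrm{UB}(\mathtt{Max}(\{E_i\}),C)=\max_i\mathrm{UB}(E_i,C)$. *)

From HB Require Import structures.
From mathcomp Require Import all_boot all_order all_algebra.
From mathcomp Require Import classical_sets reals constructive_ereal ereal.
Set Implicit Arguments. Unset Strict Implicit. Unset Printing Implicit Defensive.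
Import Order.TTheory GRing.Theory Num.Theory.
Local Open Scope classical_set_scope.
Local Open Scope ring_scope.

(* Children of Sum are given as a (finite) list; children of Max as a
   nonempty list (head + tail), since max over an empty set is undefined. *)
Inductive lexpr (R : realType) (n : nat) : Type :=
| Affine of 'cV[R]_n & R
| Sum of seq (lexpr R n)
| Max of lexpr R n & seq (lexpr R n)
| Scale of R & lexpr R n
| Bias of R & lexpr R n.

Arguments Affine {R n}.
Arguments Sum {R n}.
Arguments Max {R n}.
Arguments Scale {R n}.
Arguments Bias {R n}.

Definition dotv (R : realType) (n : nat) (w x : 'cV[R]_n) : R := (w^T *m x) 0 0.

Fixpoint lx_eval (R : realType) (n : nat) (E : lexpr R n) (x : 'cV[R]_n) : R :=
  match E with
  | Affine w b => dotv w x + b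
  | Sum es => foldr (fun e acc => lx_eval e x + acc) 0 es
  | Max e0 es => foldr (fun e acc => Num.max (lx_eval e x) acc) (lx_eval e0 x) es
  | Scale c e => c * lx_eval e x
  | Bias b e => lx_eval e x + b
  end.

Definition polyhedron (R : realType) (n : nat) (C : set 'cV[R]_n) : Prop :=
  exists (m : nat) (A : 'M[R]_(m, n)) (b : 'cV[R]_m),
    C = [set x | forall i : 'I_m, (A *m x) i 0 <= b i 0].

Local Open Scope ereal_scope.

(* Structural bounds (LB, UB) in \bar R; mathcomp's ereal multiplication
   satisfies 0 * (+-oo) = 0. *)
Fixpoint bounds (R : realType) (n : nat) (E : lexpr R n) (C : set 'cV[R]_n)
  : \bar R * \bar R :=
  match E with
  | Affine w b =>
      (ereal_inf [set (dotv w x + b)%R%:E | x in C],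
       ereal_sup [set (dotv w x + b)%R%:E | x in C])
  | Sum es =>
      foldr (fun e acc => let p := bounds e C in (p.1 + acc.1, p.2 + acc.2))
            (0, 0) es
  | Max e0 es =>
      foldr (fun e acc => let p := bounds e C in (maxe p.1 acc.1, maxe p.2 acc.2))
            (bounds e0 C) es
  | Scale c e =>
      let p := bounds e C in
      if (0 <= c)%R then (c%:E * p.1, c%:E * p.2) else (c%:E * p.2, c%:E * p.1)
  | Bias b e =>
      let p := bounds e C in (p.1 + b%:E, p.2 + b%:E)
  end.

Definition LB (R : realType) (n : nat) (E : lexpr R n) (C : set 'cV[R]_n) : \bar R :=
  (bounds E C).1.
Definition UB (R : realType) (n : nat) (E : lexpr R n) (C : set 'cV[R]_n) : \bar R :=
  (bounds E C).2.

From HB Require Import structures.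
From mathcomp Require Import all_boot all_order all_algebra.
From mathcomp Require Import classical_sets reals constructive_ereal ereal.
Set Implicit Arguments. Unset Strict Implicit. Unset Printing Implicit Defensive.
Import Order.TTheory GRing.Theory Num.Theory.
Local Open Scope classical_set_scope.
Local Open Scope ereal_scope.

(* Every operation of the grammar is monotone in its arguments (scaling by
   c < 0 is antitone, which is why LB and UB swap there), so by structural
   induction LB E C <= [[E]](x) <= UB E C at every point x of C; for Affine
   this is the definition of inf and sup.  Taking inf and sup over the
   nonempty set C gives the theorem. *)

(* The generated [lexpr_ind] has no induction hypotheses for the children of
   [Sum] and [Max]; this principle follows the [foldr] recursion of
   [lx_eval] and [bounds] instead. *)
Section LexprFoldInd.
Variables (R : realType) (n : nat) (P : lexpr R n -> Prop).
Hypotheses (P_Affine : forall w b, P (Affine w b))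
  (P_Sum_nil : P (Sum [::]))
  (P_Sum_cons : forall e es, P e -> P (Sum es) -> P (Sum (e :: es)))
  (P_Max_nil : forall e0, P e0 -> P (Max e0 [::]))
  (P_Max_cons : forall e0 e es, P e -> P (Max e0 es) -> P (Max e0 (e :: es)))
  (P_Scale : forall c e, P e -> P (Scale c e))
  (P_Bias : forall b e, P e -> P (Bias b e)).

Fixpoint lexpr_fold_ind (E : lexpr R n) : P E :=
  match E with
  | Affine w b => P_Affine w b
  | Sum es =>
      (fix sum_ind es : P (Sum es) :=
         if es is e :: es' then P_Sum_cons (lexpr_fold_ind e) (sum_ind es')
         else P_Sum_nil) es
  | Max e0 es =>
      (fix max_ind es : P (Max e0 es) :=
         if es is e :: es' then P_Max_cons (lexpr_fold_ind e) (max_ind es')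
         else P_Max_nil (lexpr_fold_ind e0)) es
  | Scale c e => P_Scale c (lexpr_fold_ind e)
  | Bias b e => P_Bias b (lexpr_fold_ind e)
  end.

End LexprFoldInd.

Lemma lee_wnmul2l (R : realDomainType) (c : R) (y z : \bar R) :
  (c <= 0)%R -> y <= z -> c%:E * z <= c%:E * y.
Proof.
move=> c_le0 le_yz; rewrite -[c]opprK EFinN !mulNe leeN2.
by apply: lee_wpmul2l; rewrite // lee_fin oppr_ge0.
Qed.

Lemma ereal_inf_le_sup (R : realType) (S : set \bar R) :
  S !=set0 -> ereal_inf S <= ereal_sup S.
Proof.
move=> [s Ss]; apply: (@le_trans _ _ s).
  exact: ereal_inf_lbound.
exact: ereal_sup_ubound.
Qed.

Lemma lx_eval_in_bounds (R : realType) (n : nat) (C : set 'cV[R]_n)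
    (E : lexpr R n) (x : 'cV[R]_n) :
  C x -> LB E C <= (lx_eval E x)%:E <= UB E C.
Proof.
move=> Cx; elim/lexpr_fold_ind: E.
- move=> w b; apply/andP; split.
    by apply: ereal_inf_lbound; exists x.
  by apply: ereal_sup_ubound; exists x.
- by rewrite /LB /UB /= lexx.
- move=> e es /andP[lo hi] /andP[lo' hi'].
  by rewrite /= EFinD; apply/andP; split; apply: leeD.
- by [].
- move=> e0 e es /andP[lo hi] /andP[lo' hi'].
  by rewrite /= EFin_max; apply/andP; split; apply: le_max2.
- move=> c e /andP[lo hi]; rewrite /LB /UB /= EFinM.
  case: (leP 0%R c) => [c_ge0 | /ltW c_le0] /=; apply/andP.
    by split; apply: lee_wpmul2l; rewrite ?lee_fin.
  by split; apply: lee_wnmul2l.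
- by move=> b e /andP[lo hi]; rewrite /= EFinD !leeD2r.
Qed.

Theorem mainTheorem6 (R : realType) (n : nat) (E : lexpr R n) (C : set 'cV[R]_n) :
  polyhedron C -> C !=set0 ->
  LB E C <= ereal_inf [set (lx_eval E x)%:E | x in C] /\
  ereal_inf [set (lx_eval E x)%:E | x in C] <= ereal_sup [set (lx_eval E x)%:E | x in C] /\
  ereal_sup [set (lx_eval E x)%:E | x in C] <= UB E C.
Proof.
move=> _ [x0 Cx0]; split; [|split].
- apply: le_ereal_inf_tmp => _ [x Cx <-].
  by case/andP: (lx_eval_in_bounds E Cx).
- by apply: ereal_inf_le_sup; exists (lx_eval E x0)%:E, x0.
- apply: ge_ereal_sup => _ [x Cx <-].
  by case/andP: (lx_eval_in_bounds E Cx).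
Qed.
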